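(* Let $\mathcal N : L(\mathbb C^{2^{n}})\to L(\mathbb C^{2^{k}})$ be a linear map. Let $\rho$ be an $n$-qubit density matrix and let $U^{\rho}$ be an $(r+n)$-qubit unitary preparing a purification of $\rho$, i.e. $U^{\rho}\ket{0^{r+n}}=\ket{\psi}$ with $\operatorname{Tr}_{\mathbb C^{2^{r}}}\ket{\psi}\bra{\psi}=\rho$ (the first $r$ qubits being the purifying register). Assume $U_{\mathcal N}$ is an $(m+n+k)$-qubit unitary which is an $(\alpha,m,\epsilon)$-block encoding of $\Lambda_{\mathcal N}^{\mathrm T_1}$. Consider $m+r+n+k$ qubits arranged as registers of sizes $m$, $r$, $n$, $k$ (in this order), and the unitary $$V=\bigl(\mathbb I_m\otimes U^{\rho\dagger}\otimes\mathbb I_k\bigr)\bigl(U_{\mathcal N}\otimes\mathbb I_r\bigr)\bigl(\mathbb I_m\otimes U^{\rho}\otimes\mathbb I_k\bigr),$$ where $U^{\rho}$ and $U^{\rho\dagger}$ act on the $r$- and $n$-qubit registers, and $U_{\mathcal N}\otimes\mathbb I_r$ denotes $U_{\mathcal N}$ acting on the $m$-, $n$- and $k$-qubit registers and the identity on the $r$-qubit register. Then $V$ is an $(\alpha,m+r+n,\epsilon)$-block encoding of $\mathcal N(\rho)$, i.e. $\bigl\|\mathcal N(\rho)-\alpha(\bra{0^{m+r+n}}\otimes\mathbb I_k)V(\ket{0^{m+r+n}}\otimes\mathbb I_k)\bigr\|_\infty\le\epsilon$.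
   Context: $\|\cdot\|_\infty$ is the operator norm and $\mathbb I_j$ the identity on $j$ qubits. Block encoding: for an $n$-qubit matrix $A$, an $(m+n)$-qubit unitary $U$ is an $(\alpha,m,\epsilon)$-block encoding of $A$ (with $\alpha,\epsilon\ge 0$) if $\bigl\|A-\alpha(\bra{0^m}\otimes\mathbb I_n)U(\ket{0^m}\otimes\mathbb I_n)\bigr\|_\infty\le\epsilon$. For a linear map $\mathcal N:L(\mathcal X)\to L(\mathcal Y)$, its Choi matrix is $\Lambda_{\mathcal N}=(\mathcal I\otimes\mathcal N)(\ket{\Phi^+}\bra{\Phi^+})\in L(\mathcal X\otimes\mathcal Y)$, where $\ket{\Phi^+}=\sum_i\ket{ii}$ is the unnormalized maximally entangled vector on $\mathcal X\otimes\mathcal X$ (computational basis). $\Lambda_{\mathcal N}^{\mathrm T_1}$ denotes the partial transpose (in the computational basis) of $\Lambda_{\mathcal N}$ on the first tensor factor $\mathcal X$. *)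

From HB Require Import structures.
From mathcomp Require Import all_boot all_order all_algebra.
From mathcomp Require Import classical_sets reals.
From mathcomp.real_closed Require Import complex mxtens.
Unset Strict Implicit. Unset Printing Implicit Defensive.
Import Order.TTheory GRing.Theory Num.Theory.
Local Open Scope ring_scope.

Section QuantumDefs.
Variable R : realType.
Local Notation C := R[i].

Definition adjmx {p q} (A : 'M[C]_(p, q)) : 'M[C]_(q, p) :=
  (map_mx (fun z : C => z^*) A)^T.

Definition unitary {d} (U : 'M[C]_d) : Prop :=
  adjmx U *m U = 1%:M /\ U *m adjmx U = 1%:M.

Definition cnorm2 (z : C) : R := (complex.Re z) ^+ 2 + (complex.Im z) ^+ 2.

Definition vnorm {d} (v : 'cV[C]_d) : R := Num.sqrt (\sum_i cnorm2 (v i 0)).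

Definition opnorm {p q} (A : 'M[C]_(p, q)) : R :=
  sup [set vnorm (A *m v) | v in [set v : 'cV[C]_q | vnorm v <= 1]]%classic.

Definition psd {d} (A : 'M[C]_d) : Prop :=
  adjmx A = A /\ forall v : 'cV[C]_d, 0 <= (adjmx v *m A *m v) 0 0.
Definition density {d} (rho : 'M[C]_d) : Prop := psd rho /\ \tr rho = 1.

(* --- qubit registers: C^(2^a) (x) C^(2^b) = C^(2^(a+b)), big-endian
       (the first register is the most significant), as for the Kronecker
       product [tensmx] --- *)
Definition qjoin a b (i : 'I_(2 ^ a)) (j : 'I_(2 ^ b)) : 'I_(2 ^ (a + b)) :=
  cast_ord (esym (expnD 2 a b)) (mxtens_index (i, j)).
Definition qsplit a b (x : 'I_(2 ^ (a + b))) : 'I_(2 ^ a) * 'I_(2 ^ b) :=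
  mxtens_unindex (cast_ord (expnD 2 a b) x).

Definition qkron a b (A : 'M[C]_(2 ^ a)) (B : 'M[C]_(2 ^ b)) : 'M[C]_(2 ^ (a + b)) :=
  castmx (esym (expnD 2 a b), esym (expnD 2 a b)) (A *t B).

Definition qcast a b (e : a = b) (A : 'M[C]_(2 ^ a)) : 'M[C]_(2 ^ b) :=
  castmx (congr1 (expn 2) e, congr1 (expn 2) e) A.

Definition ket0 a : 'cV[C]_(2 ^ a) := \col_i ((val i == 0%N)%:R).

Definition bra0I a s : 'M[C]_(2 ^ s, 2 ^ (a + s)) :=
  castmx (mul1n _, esym (expnD 2 a s)) ((ket0 a)^T *t (1%:M : 'M[C]_(2 ^ s))).
Definition ket0I a s : 'M[C]_(2 ^ (a + s), 2 ^ s) :=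
  castmx (esym (expnD 2 a s), mul1n _) (ket0 a *t (1%:M : 'M[C]_(2 ^ s))).

Definition block_encoding (alpha : R) (a : nat) (eps : R) s
    (A : 'M[C]_(2 ^ s)) (U : 'M[C]_(2 ^ (a + s))) : Prop :=
  opnorm (A - (alpha%:C)%C *: (bra0I a s *m U *m ket0I a s)) <= eps.

Definition ptrace1 a b (M : 'M[C]_(2 ^ (a + b))) : 'M[C]_(2 ^ b) :=
  \matrix_(i, j) \sum_(l < 2 ^ a) M (qjoin a b l i) (qjoin a b l j).

Definition blk d e (M : 'M[C]_(d * e)) (i j : 'I_d) : 'M[C]_e :=
  \matrix_(p, q) M (mxtens_index (i, p)) (mxtens_index (j, q)).

(* (I (x) N)(M) for M in L(C^d (x) C^d) *)
Definition idtens d e (N : 'M[C]_d -> 'M[C]_e) (M : 'M[C]_(d * d)) : 'M[C]_(d * e) :=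
  \sum_(i < d) \sum_(j < d) (delta_mx i j *t N (blk d d M i j)).

(* unnormalized maximally entangled vector |Phi+> = sum_i |ii> *)
Definition phiplus d : 'cV[C]_(d * d) :=
  \col_x (((mxtens_unindex x).1 == (mxtens_unindex x).2)%:R).

Definition choi d e (N : 'M[C]_d -> 'M[C]_e) : 'M[C]_(d * e) :=
  idtens d e N (phiplus d *m adjmx (phiplus d)).

Definition ptranspose1 d e (M : 'M[C]_(d * e)) : 'M[C]_(d * e) :=
  \sum_(i < d) \sum_(j < d) (delta_mx j i *t blk d e M i j).

Definition choiT1 n k (N : 'M[C]_(2 ^ n) -> 'M[C]_(2 ^ k)) : 'M[C]_(2 ^ (n + k)) :=
  castmx (esym (expnD 2 n k), esym (expnD 2 n k)) (ptranspose1 _ _ (choi _ _ N)).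

Definition embRN m r n k (W : 'M[C]_(2 ^ (r + n))) : 'M[C]_(2 ^ (m + r + n + k)) :=
  qcast _ _ (congr1 (addn^~ k) (addnA m r n))
        (qkron _ _ (qkron _ _ (1%:M : 'M[C]_(2 ^ m)) W) (1%:M : 'M[C]_(2 ^ k))).

(* U_N (x) I_r : U_N on the m-, n-, k-qubit registers, identity on the r one *)
Definition embMNK m r n k (U : 'M[C]_(2 ^ (m + (n + k)))) : 'M[C]_(2 ^ (m + r + n + k)) :=
  \matrix_(x, y)
    let: (x3, xk) := @qsplit (m + r + n) k x in
    let: (x2, xn) := @qsplit (m + r) n x3 in
    let: (xm, xr) := @qsplit m r x2 in
    let: (y3, yk) := @qsplit (m + r + n) k y in
    let: (y2, yn) := @qsplit (m + r) n y3 in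
    let: (ym, yr) := @qsplit m r y2 in
    U (qjoin m (n + k) xm (qjoin n k xn xk)) (qjoin m (n + k) ym (qjoin n k yn yk)) * (xr == yr)%:R.

Definition circuitV m r n k (Urho : 'M[C]_(2 ^ (r + n)))
    (UN : 'M[C]_(2 ^ (m + (n + k)))) : 'M[C]_(2 ^ (m + r + n + k)) :=
  embRN m r n k (adjmx Urho) *m embMNK m r n k UN *m embRN m r n k Urho.

End QuantumDefs.

Arguments adjmx {R p q}.
Arguments unitary {R d}.
Arguments vnorm {R d}.
Arguments opnorm {R p q}.
Arguments psd {R d}.
Arguments density {R d}.
Arguments block_encoding {R} alpha a eps s A U.
Arguments ptrace1 {R} a b M.
Arguments choiT1 {R} n k N.
Arguments circuitV {R} m r n k Urho UN.

From HB Require Import structures.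
From mathcomp Require Import all_boot all_order all_algebra.
From mathcomp Require Import classical_sets reals.
From mathcomp.real_closed Require Import complex mxtens.
From mathcomp Require Import ring lra.
Import Order.TTheory GRing.Theory Num.Theory.
Local Open Scope ring_scope.

(* Let |psi> = U^rho |0^(r+n)> and D = Lambda_N^(T_1) - alpha (<0^m| (x) I) U_N (|0^m> (x) I).
   Both N(rho) and alpha times the top-left block of V arise from (n+k)-qubit operators by the same
   linear compression X |-> (<psi| (x) I_k) (I_r (x) X) (|psi> (x) I_k): the (c,c') block of
   Lambda_N^(T_1) is N(|c'><c|), so compressing it gives N(Tr_r |psi><psi|) = N(rho); and projecting
   the first m+r+n qubits of V onto |0> turns its two U^rho factors into |psi> and <psi|.  Hence the
   error operator is the compression of D, and compressing with a unit vector does not increase the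
   operator norm (Cauchy-Schwarz over the r and n registers). *)

Lemma qsplitK a b i j : qsplit a b (qjoin a b i j) = (i, j).
Proof. by rewrite /qsplit /qjoin cast_ordKV mxtens_indexK. Qed.

Lemma qjoinK a b x : qjoin a b (qsplit a b x).1 (qsplit a b x).2 = x.
Proof. by rewrite /qsplit /qjoin -surjective_pairing mxtens_unindexK cast_ordK. Qed.

Lemma sum_qjoin (V : nmodType) a b (F : 'I_(2 ^ (a + b)) -> V) :
  \sum_x F x = \sum_i \sum_j F (qjoin a b i j).
Proof.
rewrite pair_big /= (reindex (fun p => qjoin a b p.1 p.2)) //=.
exists (qsplit a b) => [p _|x _]; first by rewrite qsplitK -surjective_pairing.
by rewrite qjoinK.
Qed.

Fact exp2_gt0 a : (0 < 2 ^ a)%N. Proof. by rewrite expn_gt0. Qed.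

Definition qzero a : 'I_(2 ^ a) := Ordinal (exp2_gt0 a).

Lemma qjoin_zero a b : qjoin a b (qzero a) (qzero b) = qzero (a + b).
Proof. by apply: val_inj; rewrite /= mul0n. Qed.

Section QubitMatrices.
Context {R : realType}.
Local Notation C := R[i].

Lemma qkronE a b (A : 'M[C]_(2 ^ a)) (B : 'M[C]_(2 ^ b)) x y :
  qkron R a b A B x y =
  A (qsplit a b x).1 (qsplit a b y).1 * B (qsplit a b x).2 (qsplit a b y).2.
Proof.
rewrite /qkron castmxE /tensmx mxE.
by rewrite !(eq_irrelevance (esym (esym (expnD 2 a b))) (expnD 2 a b)).
Qed.

Lemma adjmxE p q (A : 'M[C]_(p, q)) i j : adjmx A i j = (A j i)^*.
Proof. by rewrite /adjmx !mxE. Qed.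

Lemma ket0E a x j : ket0 R a x j = (x == qzero a)%:R.
Proof. by rewrite mxE. Qed.

Lemma mulmx_ket0E p a (U : 'M[C]_(p, 2 ^ a)) x : (U *m ket0 R a) x 0 = U x (qzero a).
Proof.
rewrite mxE (bigD1 (qzero a)) //= ket0E eqxx mulr1 big1 ?addr0 // => y /negbTE ny.
by rewrite ket0E ny mulr0.
Qed.

Lemma ket0IE a s i l j :
  ket0I R a s (qjoin a s i l) j = ((i == qzero a) && (l == j))%:R.
Proof.
rewrite /ket0I castmxE /qjoin cast_ordK /tensmx mxE mxtens_indexK /= ket0E !mxE.
set o := Ordinal _; have -> : o = j by apply: val_inj; rewrite /= modn_small.
by case: (i == qzero a); rewrite ?mul1r ?mul0r.
Qed.

Lemma bra0IE a s i l j :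
  bra0I R a s j (qjoin a s i l) = ((i == qzero a) && (j == l))%:R.
Proof.
rewrite /bra0I castmxE /qjoin cast_ordK /tensmx mxE mxtens_indexK /= !mxE.
set o := Ordinal _; have -> : o = j by apply: val_inj; rewrite /= modn_small.
change (val i == 0%N) with (i == qzero a).
by case: (i == qzero a); rewrite ?mul1r ?mul0r.
Qed.

Lemma bra0I_mulmx_ket0IE a s (M : 'M[C]_(2 ^ (a + s))) i j :
  (bra0I R a s *m M *m ket0I R a s) i j =
  M (qjoin a s (qzero a) i) (qjoin a s (qzero a) j).
Proof.
rewrite mxE sum_qjoin (big_only1 (qzero a)) //; last first.
  by move=> c /negbTE nc _; apply: big1 => l _; rewrite ket0IE nc mulr0.
rewrite (big_only1 j) //; last by move=> l /negbTE nl _; rewrite ket0IE eqxx nl mulr0.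
rewrite ket0IE !eqxx mulr1 mxE sum_qjoin (big_only1 (qzero a)) //; last first.
  by move=> c /negbTE nc _; apply: big1 => l _; rewrite bra0IE nc mul0r.
rewrite (big_only1 i) //; last by move=> l /negbTE nl _; rewrite bra0IE eqxx eq_sym nl mul0r.
by rewrite bra0IE !eqxx mul1r.
Qed.

Lemma ptranspose1E d e (M : 'M[C]_(d * e)) c i c' j :
  ptranspose1 R d e M (mxtens_index (c, i)) (mxtens_index (c', j)) = blk R d e M c' c i j.
Proof.
rewrite /ptranspose1 summxE; under eq_bigr do rewrite summxE.
under eq_bigr do under eq_bigr do rewrite tensmxE mxE.
rewrite (big_only1 c') //; last first.
  by move=> p /negbTE np _; apply: big1 => q _; rewrite [c' == p]eq_sym np andbF mul0r.
rewrite (big_only1 c) //; last by move=> q /negbTE nq _; rewrite [c == q]eq_sym nq mul0r.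
by rewrite !eqxx mul1r.
Qed.

Lemma blk_phiplus d a b :
  blk R d d (phiplus R d *m adjmx (phiplus R d)) a b = delta_mx a b.
Proof.
apply/matrixP => s t; rewrite !mxE big_ord1 adjmxE !mxE !mxtens_indexK /= conjC_nat.
by rewrite -natrM mulnb [a == s]eq_sym [b == t]eq_sym.
Qed.

Lemma blk_choi d e (N : 'M[C]_d -> 'M[C]_e) a b : blk R d e (choi R d e N) a b = N (delta_mx a b).
Proof.
apply/matrixP => i j; rewrite mxE /choi /idtens summxE; under eq_bigr do rewrite summxE.
under eq_bigr do under eq_bigr do rewrite tensmxE mxE.
rewrite (big_only1 a) //; last first.
  by move=> p /negbTE np _; apply: big1 => q _; rewrite [a == p]eq_sym np mul0r.
rewrite (big_only1 b) //; last by move=> q /negbTE nq _; rewrite [b == q]eq_sym nq andbF mul0r.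
by rewrite !eqxx mul1r blk_phiplus.
Qed.

Lemma choiT1E n k (N : 'M[C]_(2 ^ n) -> 'M[C]_(2 ^ k)) c i c' j :
  choiT1 n k N (qjoin n k c i) (qjoin n k c' j) = N (delta_mx c' c) i j.
Proof. by rewrite /choiT1 castmxE /qjoin !cast_ordK ptranspose1E blk_choi. Qed.

Lemma linear_mx_deltaE p q s t (N : {linear 'M[C]_(p, q) -> 'M[C]_(s, t)}) A i j :
  N A i j = \sum_a \sum_b A a b * N (delta_mx a b) i j.
Proof.
rewrite {1}(matrix_sum_delta A) linear_sum summxE; apply: eq_bigr => a _.
by rewrite linear_sum summxE; apply: eq_bigr => b _; rewrite linearZ mxE.
Qed.

(* [sandwich psi D] is [(<psi| (x) I_k) (I_r (x) D) (|psi> (x) I_k)]. *)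
Definition sandwich r n k (psi : 'cV[C]_(2 ^ (r + n))) (D : 'M[C]_(2 ^ (n + k))) :
    'M[C]_(2 ^ k) :=
  \matrix_(i, j) \sum_b \sum_c \sum_c' (psi (qjoin r n b c) 0)^* *
    psi (qjoin r n b c') 0 * D (qjoin n k c i) (qjoin n k c' j).

Lemma sandwichB r n k psi (A B : 'M[C]_(2 ^ (n + k))) :
  sandwich r n k psi (A - B) = sandwich r n k psi A - sandwich r n k psi B.
Proof.
apply/matrixP => i j; rewrite !mxE -sumrB; apply: eq_bigr => b _.
rewrite -sumrB; apply: eq_bigr => c _; rewrite -sumrB; apply: eq_bigr => c' _.
by rewrite !mxE mulrBr.
Qed.

Lemma sandwichZ r n k psi a (A : 'M[C]_(2 ^ (n + k))) :
  sandwich r n k psi (a *: A) = a *: sandwich r n k psi A.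
Proof.
apply/matrixP => i j; rewrite !mxE !mulr_sumr; apply: eq_bigr => b _.
rewrite mulr_sumr; apply: eq_bigr => c _; rewrite mulr_sumr; apply: eq_bigr => c' _.
by rewrite !mxE mulrCA.
Qed.

Lemma sandwich_choiT1 r n k (N : {linear 'M[C]_(2 ^ n) -> 'M[C]_(2 ^ k)}) psi :
  sandwich r n k psi (choiT1 n k N) = N (ptrace1 r n (psi *m adjmx psi)).
Proof.
apply/matrixP => i j; rewrite linear_mx_deltaE mxE exchange_big.
rewrite [RHS]exchange_big; apply: eq_bigr => c _; rewrite exchange_big.
apply: eq_bigr => c' _; rewrite mxE mulr_suml; apply: eq_bigr => b _.
by rewrite choiT1E mxE big_ord1 adjmxE [X in X * _]mulrC.
Qed.

End QubitMatrices.

Section Circuit.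
Context {R : realType}.
Local Notation C := R[i].
Variables m r n k : nat.

Definition qjoin4 a b c d : 'I_(2 ^ (m + r + n + k)) :=
  qjoin (m + r + n) k (qjoin (m + r) n (qjoin m r a b) c) d.

Lemma sum_qjoin4 (V : nmodType) (F : 'I_(2 ^ (m + r + n + k)) -> V) :
  \sum_x F x = \sum_a \sum_b \sum_c \sum_d F (qjoin4 a b c d).
Proof. by rewrite !sum_qjoin. Qed.

Lemma qjoin4_zero i : qjoin (m + r + n) k (qzero (m + r + n)) i =
  qjoin4 (qzero m) (qzero r) (qzero n) i.
Proof. by rewrite /qjoin4 !qjoin_zero. Qed.

Lemma embMNKE (U : 'M[C]_(2 ^ (m + (n + k)))) a b c d a' b' c' d' :
  embMNK R m r n k U (qjoin4 a b c d) (qjoin4 a' b' c' d') =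
  U (qjoin m (n + k) a (qjoin n k c d)) (qjoin m (n + k) a' (qjoin n k c' d')) *
  (b == b')%:R.
Proof. by rewrite /embMNK mxE /qjoin4 !qsplitK. Qed.

Lemma cast_qjoin4 e a b c d : cast_ord e (qjoin4 a b c d) =
  qjoin (m + (r + n)) k (qjoin m (r + n) a (qjoin r n b c)) d.
Proof.
by apply: val_inj => /=; congr (_ * _ + _)%N; rewrite expnD mulnDl mulnA addnA.
Qed.

Lemma embRNE (W : 'M[C]_(2 ^ (r + n))) a b c d a' b' c' d' :
  embRN R m r n k W (qjoin4 a b c d) (qjoin4 a' b' c' d') =
  (a == a')%:R * W (qjoin r n b c) (qjoin r n b' c') * (d == d')%:R.
Proof.
by rewrite /embRN /qcast castmxE !cast_qjoin4 qkronE !qsplitK /= qkronE !qsplitK /= !mxE.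
Qed.

Lemma mul_embRN_embMNK_rowE (U : 'M[C]_(2 ^ (r + n))) (UN : 'M[C]_(2 ^ (m + (n + k))))
    i a' b' c' d' :
  (embRN R m r n k (adjmx U) *m embMNK R m r n k UN)
    (qjoin4 (qzero m) (qzero r) (qzero n) i) (qjoin4 a' b' c' d') =
  \sum_c (U (qjoin r n b' c) (qzero (r + n)))^* *
    UN (qjoin m (n + k) (qzero m) (qjoin n k c i)) (qjoin m (n + k) a' (qjoin n k c' d')).
Proof.
rewrite mxE sum_qjoin4 (big_only1 (qzero m)) //; last first.
  move=> a /negbTE na _; apply: big1 => b _; apply: big1 => c _; apply: big1 => d _.
  by rewrite embRNE eq_sym na !mul0r.
rewrite (big_only1 b') //; last first.
  move=> b /negbTE nb _; apply: big1 => c _; apply: big1 => d _.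
  by rewrite embMNKE nb !mulr0.
apply: eq_bigr => c _; rewrite (big_only1 i) //; last first.
  by move=> d /negbTE nd _; rewrite embRNE eq_sym nd !mulr0 mul0r.
by rewrite embRNE embMNKE adjmxE qjoin_zero !eqxx /= !mulr1 mul1r.
Qed.

Lemma circuitV_blockE (U : 'M[C]_(2 ^ (r + n))) (UN : 'M[C]_(2 ^ (m + (n + k)))) :
  bra0I R (m + r + n) k *m circuitV m r n k U UN *m ket0I R (m + r + n) k =
  sandwich r n k (U *m ket0 R (r + n)) (bra0I R m (n + k) *m UN *m ket0I R m (n + k)).
Proof.
apply/matrixP => i j; rewrite bra0I_mulmx_ket0IE !qjoin4_zero /circuitV !mxE.
rewrite sum_qjoin4 (big_only1 (qzero m)) //; last first.
  move=> a /negbTE na _; apply: big1 => b _; apply: big1 => c _; apply: big1 => d _.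
  by rewrite embRNE na !mul0r mulr0.
apply: eq_bigr => b _; rewrite [RHS]exchange_big; apply: eq_bigr => c' _.
rewrite (big_only1 j) //; last by move=> d /negbTE nd _; rewrite embRNE nd !mulr0.
rewrite mul_embRN_embMNK_rowE embRNE qjoin_zero !eqxx /= mulr1 mul1r !mulr_suml.
apply: eq_bigr => c _.
by rewrite !mulmx_ket0E bra0I_mulmx_ket0IE mulrAC.
Qed.

End Circuit.

Section Norms.
Context {R : realType}.
Local Notation C := R[i].
Local Notation "x %:CC" := ((x%:C)%C) (at level 2, format "x %:CC").

Definition sqnorm {d} (v : 'cV[C]_d) : C := \sum_i v i 0 * (v i 0)^*.

Lemma sqnorm0 d : sqnorm (0 : 'cV[C]_d) = 0.
Proof. by rewrite /sqnorm big1 // => i _; rewrite mxE mul0r. Qed.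

Lemma sqnormZ {d} (x : R) (v : 'cV[C]_d) : sqnorm (x%:CC *: v) = (x ^+ 2)%:CC * sqnorm v.
Proof.
rewrite /sqnorm mulr_sumr; apply: eq_bigr => i _.
by rewrite mxE rmorphM /= -[(x%:CC)^*]/(x%:CC^*%C) conjc_real rmorphXn; ring.
Qed.

Lemma sqnorm_eq0 {d} (v : 'cV[C]_d) : sqnorm v = 0 -> v = 0.
Proof.
move=> /eqP; rewrite psumr_eq0 => [/allP v0|i _]; last exact: mul_conjC_ge0.
apply/matrixP => i j; rewrite ord1 mxE.
by have := v0 i (mem_index_enum i); rewrite implyTb mul_conjC_eq0 => /eqP.
Qed.

Lemma vnorm_ge0 {d} (v : 'cV[C]_d) : 0 <= vnorm v.
Proof. exact: sqrtr_ge0. Qed.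

Lemma sqnorm_vnorm {d} (v : 'cV[C]_d) : sqnorm v = (vnorm v ^+ 2)%:CC.
Proof.
rewrite /vnorm sqr_sqrtr; last by apply: sumr_ge0 => i _; rewrite addr_ge0 ?sqr_ge0.
by rewrite rmorph_sum; apply: eq_bigr => i _; rewrite -normCK; symmetry; exact: add_Re2_Im2.
Qed.

Lemma vnorm_le_sqnorm {d} (v : 'cV[C]_d) t :
  0 <= t -> (vnorm v <= t) = (sqnorm v <= (t ^+ 2)%:CC).
Proof. by move=> t0; rewrite sqnorm_vnorm lecR ler_pXn2r // nnegrE ?vnorm_ge0. Qed.

Lemma sqnorm_le1 {d} (v : 'cV[C]_d) : vnorm v <= 1 -> sqnorm v <= 1.
Proof. by rewrite vnorm_le_sqnorm // expr1n rmorph1. Qed.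

Lemma vnorm_eq0 {d} (v : 'cV[C]_d) : vnorm v = 0 -> v = 0.
Proof. by move=> v0; apply: sqnorm_eq0; rewrite sqnorm_vnorm v0 expr2 mul0r. Qed.

Lemma vnorm0 d : vnorm (0 : 'cV[C]_d) = 0.
Proof.
apply/eqP; rewrite eq_le vnorm_ge0 andbT vnorm_le_sqnorm //.
by rewrite sqnorm0 expr2 mul0r.
Qed.

Lemma sqnorm_ket0_unitary a (U : 'M[C]_(2 ^ a)) :
  adjmx U *m U = 1%:M -> sqnorm (U *m ket0 R a) = 1.
Proof.
move=> /(congr1 (fun M : 'M[C]_(2 ^ a) => M (qzero a) (qzero a))).
rewrite /= !mxE eqxx mulr1n => <-; apply: eq_bigr => x _.
by rewrite mulmx_ket0E adjmxE mulrC.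
Qed.

(* Without an upper bound the [sup] defining [opnorm] would be a junk value. *)
Lemma opnorm_bounded {p q} (D : 'M[C]_(p, q)) :
  exists K, forall v, vnorm v <= 1 -> vnorm (D *m v) <= K.
Proof.
pose K : C := \sum_i (\sum_j `|D i j|) ^+ 2.
have K_ge0 : 0 <= K by apply: sumr_ge0 => i _; rewrite exprn_ge0 ?sumr_ge0.
exists (1 + complex.Re K) => v /sqnorm_le1 v1.
have vj_le1 j : `|v j 0| <= 1.
  rewrite -(@expr_le1 _ 2) // normCK; apply: le_trans v1.
  by rewrite /sqnorm (bigD1 j) //= lerDl sumr_ge0 // => i _; exact: mul_conjC_ge0.
have DvK : sqnorm (D *m v) <= K.
  apply: ler_sum => i _; rewrite -normCK ler_pXn2r ?nnegrE ?sumr_ge0 //.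
  rewrite mxE; apply: le_trans (ler_norm_sum _ _ _) _; apply: ler_sum => j _.
  by rewrite normrM ler_piMr.
have : vnorm (D *m v) ^+ 2 <= complex.Re K.
  by rewrite -lecR -sqnorm_vnorm (RRe_real (ger0_real K_ge0)).
by have := vnorm_ge0 (D *m v); move: (vnorm _) (complex.Re K) => x y; nra.
Qed.

Lemma vnorm_mulmx_opnorm {p q} (D : 'M[C]_(p, q)) v :
  vnorm v <= 1 -> vnorm (D *m v) <= opnorm D.
Proof.
move=> v1.
have : has_sup [set vnorm (D *m u) | u in [set u | vnorm u <= 1]]%classic.
  split; first by exists (vnorm (D *m 0)), 0 => //=; rewrite vnorm0.
  by have [K DK] := opnorm_bounded D; exists K => _ [u u1 <-]; exact: DK.
by move/sup_upper_bound; apply; exists v.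
Qed.

Lemma opnorm_ge0 {p q} (D : 'M[C]_(p, q)) : 0 <= opnorm D.
Proof.
have /(vnorm_mulmx_opnorm D) : vnorm (0 : 'cV[C]_q) <= 1 by rewrite vnorm0.
exact/le_trans/vnorm_ge0.
Qed.

Lemma opnorm_le {p q} (D : 'M[C]_(p, q)) t :
  (forall v, vnorm v <= 1 -> vnorm (D *m v) <= t) -> opnorm D <= t.
Proof.
move=> Dt; apply: ge_sup => [|_ [v v1 <-]]; last exact: Dt.
by exists (vnorm (D *m 0)), 0 => //=; rewrite vnorm0.
Qed.

Lemma sqnorm_mulmx_le {p q} (D : 'M[C]_(p, q)) v :
  sqnorm (D *m v) <= (opnorm D ^+ 2)%:CC * sqnorm v.
Proof.
have [->|v_neq0] := eqVneq v 0; first by rewrite mulmx0 !sqnorm0 mulr0.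
set s := vnorm v; have s_neq0 : s != 0 := contra_neq (vnorm_eq0 v) v_neq0.
have u1 : vnorm ((s^-1)%:CC *: v) <= 1.
  rewrite vnorm_le_sqnorm // sqnormZ sqnorm_vnorm -/s -rmorphM exprVn.
  by rewrite mulVf ?expf_neq0 // expr1n rmorph1.
have := vnorm_mulmx_opnorm D _ u1; rewrite vnorm_le_sqnorm ?opnorm_ge0 //.
rewrite -scalemxAr sqnormZ exprVn rmorphV ?unitfE ?sqrf_eq0 // => Dv.
rewrite [sqnorm v]sqnorm_vnorm -/s mulrC -ler_pdivrMl // -(rmorph0 (real_complex R)).
by rewrite ltcR exprn_gt0 // lt_def s_neq0 vnorm_ge0.
Qed.

Lemma cauchy_schwarz_unit (T : finType) (psi w : T -> C) :
  \sum_t psi t * (psi t)^* = 1 ->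
  (\sum_t (psi t)^* * w t) * (\sum_t (psi t)^* * w t)^* <= \sum_t w t * (w t)^*.
Proof.
move=> psi1; set y := \sum_t (psi t)^* * w t.
have wpsi : \sum_t w t * (psi t)^* = y by apply: eq_bigr => t _; rewrite mulrC.
have psiw : \sum_t psi t * (w t)^* = y^*.
  by rewrite /y rmorph_sum; apply: eq_bigr => t _; rewrite rmorphM /= conjCK mulrC.
have residual : \sum_t (w t - psi t * y) * (w t - psi t * y)^* =
    \sum_t w t * (w t)^* - y * y^*.
  rewrite (eq_bigr (fun t => w t * (w t)^* - (w t * (psi t)^*) * y^* -
      (psi t * (w t)^*) * y + (psi t * (psi t)^*) * (y * y^*))); last first.
    by move=> t _; rewrite rmorphB rmorphM; ring.
  by rewrite big_split /= !sumrB -!mulr_suml wpsi psiw psi1; ring.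
by rewrite -subr_ge0 -residual sumr_ge0 // => t _; exact: mul_conjC_ge0.
Qed.

Section SandwichNorm.
Context {r n k : nat} (psi : 'cV[C]_(2 ^ (r + n))) (D : 'M[C]_(2 ^ (n + k))).

(* [slice_tens v b] is [(<b| (x) I_n (x) I_k) (|psi> (x) v)]. *)
Definition slice_tens (v : 'cV[C]_(2 ^ k)) b : 'cV[C]_(2 ^ (n + k)) :=
  \col_u (psi (qjoin r n b (qsplit n k u).1) 0 * v (qsplit n k u).2 0).

Lemma sandwich_mulmxE v i : (sandwich r n k psi D *m v) i 0 =
  \sum_b \sum_c (psi (qjoin r n b c) 0)^* * (D *m slice_tens v b) (qjoin n k c i) 0.
Proof.
rewrite mxE; under eq_bigr => j _ do rewrite mxE mulr_suml.
rewrite exchange_big; apply: eq_bigr => b _.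
under eq_bigr => j _ do rewrite mulr_suml.
rewrite exchange_big; apply: eq_bigr => c _.
rewrite mxE sum_qjoin mulr_sumr; under eq_bigr => j _ do rewrite mulr_suml.
rewrite exchange_big; apply: eq_bigr => c' _.
by rewrite mulr_sumr; apply: eq_bigr => j _; rewrite mxE qsplitK /=; ring.
Qed.

Lemma sum_sqnorm_slice_tens v : \sum_b sqnorm (slice_tens v b) = sqnorm psi * sqnorm v.
Proof.
rewrite /sqnorm sum_qjoin mulr_suml; apply: eq_bigr => b _.
rewrite sum_qjoin mulr_suml; apply: eq_bigr => c _.
by rewrite mulr_sumr; apply: eq_bigr => j _; rewrite mxE qsplitK /= rmorphM; ring.
Qed.

Lemma sqnorm_sandwich_mulmx_le v : sqnorm psi = 1 ->
  sqnorm (sandwich r n k psi D *m v) <= \sum_b sqnorm (D *m slice_tens v b).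
Proof.
rewrite /sqnorm sum_qjoin pair_big /= => psi1.
under [X in _ <= X]eq_bigr => b _ do rewrite sum_qjoin.
rewrite [X in _ <= X]pair_big [X in _ <= X]exchange_big /=.
apply: ler_sum => i _; rewrite sandwich_mulmxE pair_big /=.
exact: cauchy_schwarz_unit _ _ _ psi1.
Qed.

Lemma opnorm_sandwich : sqnorm psi = 1 -> opnorm (sandwich r n k psi D) <= opnorm D.
Proof.
move=> psi1; apply: opnorm_le => v v1; rewrite vnorm_le_sqnorm ?opnorm_ge0 //.
apply: le_trans (sqnorm_sandwich_mulmx_le v psi1) _.
apply: le_trans (ler_sum _ (fun b _ => sqnorm_mulmx_le D (slice_tens v b))) _.
rewrite -mulr_sumr sum_sqnorm_slice_tens psi1 mul1r -[X in _ <= X]mulr1.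
by rewrite ler_wpM2l ?sqnorm_le1 // ler0c exprn_ge0 ?opnorm_ge0.
Qed.

End SandwichNorm.

End Norms.

Theorem theorem1 (R : realType) (n k r m : nat)
  (N : {linear 'M[R[i]]_(2 ^ n) -> 'M[R[i]]_(2 ^ k)})
  (rho : 'M[R[i]]_(2 ^ n)) (Urho : 'M[R[i]]_(2 ^ (r + n)))
  (UN : 'M[R[i]]_(2 ^ (m + (n + k)))) (alpha eps : R) :
  density rho ->
  unitary Urho ->
  ptrace1 r n ((Urho *m ket0 R (r + n)) *m adjmx (Urho *m ket0 R (r + n))) = rho ->
  unitary UN ->
  0 <= alpha -> 0 <= eps ->
  block_encoding alpha m eps (n + k) (choiT1 n k N) UN ->
  block_encoding alpha (m + r + n) eps k (N rho) (circuitV m r n k Urho UN).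
Proof.
(* Only (U^rho)^dagger U^rho = 1 is needed. *)
move=> _ [Urho_isometry _] rho_purified _ _ _ UN_encodes.
rewrite /block_encoding circuitV_blockE -rho_purified -sandwich_choiT1.
rewrite -sandwichZ -sandwichB.
exact: le_trans (opnorm_sandwich _ _ (sqnorm_ket0_unitary _ _ Urho_isometry)) UN_encodes.
Qed.
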